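(* Let $\alpha\in\mathbb{N}_0$ and let $L_{2\alpha+4,x}^{\alpha}y(x)=(-1)^{\alpha+1}e^x x\,D_x^{\alpha+2}\{e^{-x}D_x^{\alpha+2}[x^{\alpha+1}y(x)]\}$. Then for all $y,u\in C^{(2\alpha+4)}(0,\infty)$ and $x>0$: $$L_{2\alpha+4,x}^{\alpha}y(x)=(-1)^{\alpha+1}\prod_{j=0}^{\alpha+1}\Big\{L_{2,x}^{\alpha}-\frac{\alpha+1}{x}-j\Big\}y(x),\qquad L_{2\alpha+4,x}^{\alpha}[xu(x)]=(-1)^{\alpha+1}x\prod_{j=0}^{\alpha+1}\big\{L_{2,x}^{\alpha+2}-j-1\big\}u(x),$$ and $$L_{2\alpha+4,x}^{\alpha}y(x)=(-1)^{\alpha+1}\prod_{j=0}^{\alpha+1}\Big\{L_{2,x}^{2j-1}-\frac{2j}{x}-j\Big\}y(x),\qquad L_{2\alpha+4,x}^{\alpha}[xu(x)]=(-1)^{\alpha+1}x\prod_{j=0}^{\alpha+1}\big\{L_{2,x}^{2j+1}-j-1\big\}u(x).$$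
   Context: $D_x^i$ is the $i$-fold derivative. For real $\gamma$ (including $\gamma=-1$), $L_{2,x}^{\gamma}=xD_x^2+(\gamma+1-x)D_x$ (so $L_{2,x}^{-1}=x[D_x^2-D_x]$); terms like $-\frac{c}{x}$ act as multiplication operators. The product $\prod_{j=0}^{\alpha+1}\{A_j\}$ of differential expressions is non-commutative and means $A_{\alpha+1}A_{\alpha}\cdots A_1A_0$, i.e. the factors are applied successively to the function on the right in order $j=0,1,\dots,\alpha+1$. *)

From Stdlib Require Import Reals Lra ClassicalEpsilon.
Open Scope R_scope.

(* D_x f : the derivative of f, chosen by classical choice (arbitrary value
   at points where f is not differentiable; only used where it is). *)
Definition Dx (f : R -> R) : R -> R :=
  fun x => epsilon (inhabits 0) (fun l => derivable_pt_lim f x l).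

Definition Dn (i : nat) (f : R -> R) : R -> R := Nat.iter i Dx f.

Definition Cn_pos (n : nat) (f : R -> R) : Prop :=
  (forall k, (k < n)%nat -> forall x, 0 < x -> exists l, derivable_pt_lim (Dn k f) x l) /\
  (forall x, 0 < x -> continuity_pt (Dn n f) x).

Definition L2 (g : R) (f : R -> R) : R -> R :=
  fun x => x * Dn 2 f x + (g + 1 - x) * Dn 1 f x.

(* Non-commutative product: opprod A m = A_{m-1} ∘ ... ∘ A_1 ∘ A_0,
   so \prod_{j=0}^{a+1} {A_j} = opprod A (a+2). *)
Fixpoint opprod (A : nat -> (R -> R) -> (R -> R)) (m : nat) (f : R -> R) : R -> R :=
  match m with
  | O => f
  | S m' => A m' (opprod A m' f)
  end.

Definition Lhigh (a : nat) (y : R -> R) : R -> R :=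
  fun x => (-1) ^ (a + 1) * exp x * x *
    Dn (a + 2) (fun t => exp (- t) * Dn (a + 2) (fun s => s ^ (a + 1) * y s) t) x.

(* Put E := D - 1 = e^x D e^{-x}, so that L^α_{2α+4}[x u] = (-1)^{α+1} x T_{α+2} u with
   T_n u := E^n D^n (x^n u). Both D and E satisfy P (x g) = g + x P g, and this yields the
   key identity E^{m+1} (p + x D) = (L_2^{p+m} - p) E^m.
   Since D^{n+1} x^{n+1} = (n + 1 + x D) D^n x^n, it gives T_{n+1} = (L_2^{2n+1} - n - 1) T_n.
   For V_{n,m} := E^m x^{m-n} D^m x^n, whose integrand satisfies
   x^{m+1-n} D^{m+1} x^n = (n - m + x D) x^{m-n} D^m x^n, it gives
   V_{n,m+1} = (L_2^n - (n - m)) V_{n,m}; as V_{n,n} = T_n and the factors L_2^n - c commute,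
   the product may be taken in increasing order of c. Finally
   L_2^γ [x v] = x (L_2^{γ+2} - 1) v + (γ + 1) v, so writing y = x v turns the factorisations
   of L^α_{2α+4}[x u] into those of L^α_{2α+4} y. *)

From Pilot Require Import Defs.
From Stdlib Require Import Reals Lra Lia ClassicalEpsilon FunctionalExtensionality
  PropExtensionality Setoid Morphisms.
(* Reals also exports a [Dx]; ours must shadow it. *)
Import Defs.
Open Scope R_scope.

(* Functions are only regular on (0, ∞), so identities are stated up to equality there. *)
Definition eqpos (f g : R -> R) : Prop := forall t, 0 < t -> f t = g t.
Infix "≐" := eqpos (at level 70).

Lemma eqpos_refl f : f ≐ f.
Proof. now intros t _. Qed.

Lemma eqpos_sym f g : f ≐ g -> g ≐ f.
Proof. intros H t ht; symmetry; auto. Qed.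

Lemma eqpos_trans f g h : f ≐ g -> g ≐ h -> f ≐ h.
Proof. intros H1 H2 t ht; rewrite H1; auto. Qed.

Add Parametric Relation : (R -> R) eqpos
  reflexivity proved by eqpos_refl
  symmetry proved by eqpos_sym
  transitivity proved by eqpos_trans as eqpos_rel.

Lemma Dx_unique f x l : derivable_pt_lim f x l -> Dx f x = l.
Proof.
  intros H. apply (uniqueness_limite f x); [|exact H].
  unfold Dx. apply epsilon_spec. now exists l.
Qed.

Lemma derivable_pt_lim_eqpos f g x l :
  f ≐ g -> 0 < x -> derivable_pt_lim f x l -> derivable_pt_lim g x l.
Proof.
  intros E hx H eps heps. destruct (H eps heps) as [d Hd].
  assert (hd : 0 < Rmin d x) by (apply Rmin_pos; [apply (cond_pos d)|lra]).
  exists (mkposreal _ hd). intros h hh hlt. simpl in hlt.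
  assert (h1 : Rabs h < d) by (eapply Rlt_le_trans; [exact hlt|apply Rmin_l]).
  assert (h2 : Rabs h < x) by (eapply Rlt_le_trans; [exact hlt|apply Rmin_r]).
  apply Rabs_def2 in h2.
  rewrite <- (E x hx), <- (E (x + h)) by lra. now apply Hd.
Qed.

#[export] Instance Dx_eqpos : Proper (eqpos ==> eqpos) Dx.
Proof.
  intros f g E x hx. unfold Dx. f_equal. apply functional_extensionality; intro l.
  apply propositional_extensionality; split; apply derivable_pt_lim_eqpos; auto.
  now symmetry.
Qed.

Definition derivable_pos (f : R -> R) : Prop :=
  forall t, 0 < t -> exists l, derivable_pt_lim f t l.

Definition derivable_upto (n : nat) (f : R -> R) : Prop :=
  forall k, (k < n)%nat -> derivable_pos (Dn k f).

Lemma Dx_derivable f t : derivable_pos f -> 0 < t -> derivable_pt_lim f t (Dx f t).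
Proof. intros H ht. destruct (H t ht) as [l Hl]. now rewrite (Dx_unique _ _ _ Hl). Qed.

Lemma derivable_upto_le m n f : (m <= n)%nat -> derivable_upto n f -> derivable_upto m f.
Proof. intros hm H k hk. apply H; lia. Qed.

Ltac weaken H := eapply derivable_upto_le; [|exact H]; lia.

Lemma derivable_upto_S n f :
  derivable_upto (S n) f <-> derivable_pos f /\ derivable_upto n (Dx f).
Proof.
  split.
  - intros H; split; [apply (H 0%nat); lia|].
    intros k hk. unfold Dn. rewrite <- Nat.iter_succ_r. apply (H (S k)); lia.
  - intros [H0 H] [|k] hk; [exact H0|]. unfold Dn. rewrite Nat.iter_succ_r. now apply H; lia.
Qed.

Lemma derivable_upto_pos n f : derivable_upto (S n) f -> derivable_pos f.
Proof. now intros H%derivable_upto_S. Qed.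

Lemma derivable_upto_Dx n f : derivable_upto (S n) f -> derivable_upto n (Dx f).
Proof. now intros H%derivable_upto_S. Qed.

Lemma iter_eqpos (P : (R -> R) -> R -> R) m :
  Proper (eqpos ==> eqpos) P -> Proper (eqpos ==> eqpos) (Nat.iter m P).
Proof. intros HP f g H. induction m; [exact H|]. now apply HP. Qed.

#[export] Instance Dn_eqpos k : Proper (eqpos ==> eqpos) (Dn k) := iter_eqpos Dx k Dx_eqpos.

Lemma derivable_pos_eqpos f g : f ≐ g -> derivable_pos f -> derivable_pos g.
Proof.
  intros E H t ht. destruct (H t ht) as [l Hl]. exists l. eapply derivable_pt_lim_eqpos; eauto.
Qed.

#[export] Instance derivable_upto_eqpos n : Proper (eqpos ==> iff) (derivable_upto n).
Proof.
  intros f g E; split; intros H k hk.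
  - apply (derivable_pos_eqpos (Dn k f)); [now rewrite E | now apply H].
  - apply (derivable_pos_eqpos (Dn k g)); [now rewrite E | now apply H].
Qed.

Lemma Dx_plus f g : derivable_pos f -> derivable_pos g ->
  Dx (fun t => f t + g t) ≐ (fun t => Dx f t + Dx g t).
Proof.
  intros Hf Hg t ht. apply Dx_unique, (derivable_pt_lim_plus f g); now apply Dx_derivable.
Qed.

Lemma Dx_minus f g : derivable_pos f -> derivable_pos g ->
  Dx (fun t => f t - g t) ≐ (fun t => Dx f t - Dx g t).
Proof.
  intros Hf Hg t ht. apply Dx_unique, (derivable_pt_lim_minus f g); now apply Dx_derivable.
Qed.

Lemma Dx_mult f g : derivable_pos f -> derivable_pos g ->
  Dx (fun t => f t * g t) ≐ (fun t => Dx f t * g t + f t * Dx g t).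
Proof.
  intros Hf Hg t ht. apply Dx_unique, (derivable_pt_lim_mult f g); now apply Dx_derivable.
Qed.

Lemma derivable_pos_plus f g : derivable_pos f -> derivable_pos g ->
  derivable_pos (fun t => f t + g t).
Proof. intros Hf Hg t ht. eexists. apply (derivable_pt_lim_plus f g); now apply Dx_derivable. Qed.

Lemma derivable_pos_minus f g : derivable_pos f -> derivable_pos g ->
  derivable_pos (fun t => f t - g t).
Proof. intros Hf Hg t ht. eexists. apply (derivable_pt_lim_minus f g); now apply Dx_derivable. Qed.

Lemma derivable_pos_mult f g : derivable_pos f -> derivable_pos g ->
  derivable_pos (fun t => f t * g t).
Proof. intros Hf Hg t ht. eexists. apply (derivable_pt_lim_mult f g); now apply Dx_derivable. Qed.

Lemma derivable_upto_plus n f g : derivable_upto n f -> derivable_upto n g ->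
  derivable_upto n (fun t => f t + g t).
Proof.
  revert f g; induction n as [|n IH]; [intros f g _ _ k hk; lia|].
  intros f g [Hf Hf']%derivable_upto_S [Hg Hg']%derivable_upto_S.
  apply derivable_upto_S. split; [now apply derivable_pos_plus|].
  rewrite Dx_plus by assumption. now apply IH.
Qed.

Lemma derivable_upto_minus n f g : derivable_upto n f -> derivable_upto n g ->
  derivable_upto n (fun t => f t - g t).
Proof.
  revert f g; induction n as [|n IH]; [intros f g _ _ k hk; lia|].
  intros f g [Hf Hf']%derivable_upto_S [Hg Hg']%derivable_upto_S.
  apply derivable_upto_S. split; [now apply derivable_pos_minus|].
  rewrite Dx_minus by assumption. now apply IH.
Qed.

Lemma derivable_upto_mult n f g : derivable_upto n f -> derivable_upto n g ->
  derivable_upto n (fun t => f t * g t).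
Proof.
  revert f g; induction n as [|n IH]; [intros f g _ _ k hk; lia|].
  intros f g Hf Hg. pose proof Hf as [Hf0 Hf']%derivable_upto_S.
  pose proof Hg as [Hg0 Hg']%derivable_upto_S.
  apply derivable_upto_S. split; [now apply derivable_pos_mult|].
  rewrite Dx_mult by assumption.
  apply derivable_upto_plus; apply IH; auto; weaken Hf || weaken Hg.
Qed.

Definition smooth (f : R -> R) : Prop := forall n, derivable_upto n f.

Lemma smooth_const c : smooth (fun _ => c).
Proof.
  intros n; revert c; induction n as [|n IH]; intros c; [intros k hk; lia|].
  apply derivable_upto_S; split.
  - intros t _. eexists. apply derivable_pt_lim_const.
  - assert (E : Dx (fun _ => c) ≐ (fun _ => 0))
      by (intros t _; apply Dx_unique, derivable_pt_lim_const).
    rewrite E. apply IH.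
Qed.

Lemma derivable_upto_scal n c f : derivable_upto n f -> derivable_upto n (fun t => c * f t).
Proof. apply (derivable_upto_mult n (fun _ => c)), smooth_const. Qed.

Lemma smooth_of_Dx f g : derivable_pos f -> Dx f ≐ g ->
  (forall n, derivable_upto n f -> derivable_upto n g) -> smooth f.
Proof.
  intros Hf E Hg n; induction n as [|n IH]; [intros k hk; lia|].
  apply derivable_upto_S; split; [exact Hf|]. rewrite E. now apply Hg.
Qed.

Lemma smooth_mult f g : smooth f -> smooth g -> smooth (fun t => f t * g t).
Proof. intros Hf Hg n. now apply derivable_upto_mult. Qed.

Lemma smooth_id : smooth (fun t => t).
Proof.
  apply (smooth_of_Dx _ (fun _ => 1)).
  - intros t _. eexists. apply derivable_pt_lim_id.
  - intros t _. apply Dx_unique, derivable_pt_lim_id.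
  - intros n _. apply smooth_const.
Qed.

Lemma derivable_pos_mul_id g : derivable_pos g -> derivable_pos (fun t => t * g t).
Proof. apply derivable_pos_mult, (derivable_upto_pos 0), smooth_id. Qed.

Lemma smooth_pow p : smooth (fun t => t ^ p).
Proof. induction p; [exact (smooth_const 1)|]. exact (smooth_mult _ _ smooth_id IHp). Qed.

Lemma derivable_pt_lim_inv_pos t : 0 < t -> derivable_pt_lim (fun s => / s) t (- (/ t * / t)).
Proof.
  intros ht.
  assert (H := derivable_pt_lim_div (fun _ => 1) (fun s => s) t 0 1
                 (derivable_pt_lim_const 1 t) (derivable_pt_lim_id t) ltac:(lra)).
  unfold div_fct in H. replace (- (/ t * / t)) with ((0 * t - 1 * 1) / t²).
  - apply (derivable_pt_lim_eqpos (fun s => 1 / s)); auto. intros s _. unfold Rdiv; ring.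
  - unfold Rsqr; field; lra.
Qed.

Lemma smooth_inv : smooth (fun t => / t).
Proof.
  apply (smooth_of_Dx _ (fun t => -1 * (/ t * / t))).
  - intros t ht. eexists. now apply derivable_pt_lim_inv_pos.
  - intros t ht. rewrite (Dx_unique _ _ _ (derivable_pt_lim_inv_pos t ht)). ring.
  - intros n H. now apply derivable_upto_scal, derivable_upto_mult.
Qed.

Lemma smooth_inv_pow p : smooth (fun t => (/ t) ^ p).
Proof. induction p; [exact (smooth_const 1)|]. exact (smooth_mult _ _ smooth_inv IHp). Qed.

(* Linearity and [P (x g) = g + x P g] are all the Leibniz formula for [P^m (x g)] needs;
   both [Dx] and [Eop] below qualify. *)
Section Iterate.

Variable P : (R -> R) -> R -> R.
Hypothesis P_eqpos : Proper (eqpos ==> eqpos) P.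
#[local] Existing Instance P_eqpos.
Hypothesis P_reg : forall n f, derivable_upto (S n) f -> derivable_upto n (P f).
Hypothesis P_lin : forall a b f g, derivable_pos f -> derivable_pos g ->
  P (fun t => a * f t + b * g t) ≐ (fun t => a * P f t + b * P g t).
Hypothesis P_mul_id : forall g, derivable_pos g ->
  P (fun t => t * g t) ≐ (fun t => g t + t * P g t).

Lemma iter_reg m n f : derivable_upto (m + n) f -> derivable_upto n (Nat.iter m P f).
Proof.
  revert n; induction m as [|m IH]; intros n H; [exact H|].
  apply P_reg, IH. now rewrite <- Nat.add_succ_comm.
Qed.

Lemma iter_derivable_pos m n f : derivable_upto (S (m + n)) f ->
  derivable_pos (Nat.iter m P f).
Proof. intros H. apply (derivable_upto_pos n), iter_reg. now rewrite Nat.add_succ_r. Qed.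

Lemma iter_lin m a b f g : derivable_upto m f -> derivable_upto m g ->
  Nat.iter m P (fun t => a * f t + b * g t) ≐
  (fun t => a * Nat.iter m P f t + b * Nat.iter m P g t).
Proof.
  induction m as [|m IH]; intros Hf Hg; [reflexivity|].
  rewrite !Nat.iter_succ, IH by (weaken Hf || weaken Hg).
  apply P_lin; apply (iter_derivable_pos m 0); now rewrite Nat.add_0_r.
Qed.

Lemma iter_mul_id m g : derivable_upto (S m) g ->
  Nat.iter (S m) P (fun t => t * g t) ≐
  (fun t => INR (S m) * Nat.iter m P g t + t * Nat.iter (S m) P g t).
Proof.
  induction m as [|m IH]; intros Hg.
  - simpl. rewrite P_mul_id by now apply (derivable_upto_pos 0).
    intros t _. ring.
  - rewrite Nat.iter_succ, IH by weaken Hg.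
    set (A := Nat.iter m P g); set (B := Nat.iter (S m) P g).
    assert (E : (fun t => INR (S m) * A t + t * B t) ≐
                (fun t => INR (S m) * A t + 1 * (fun s => s * B s) t))
      by (intros t _; ring).
    assert (HA : derivable_pos A) by (apply (iter_derivable_pos m 1); weaken Hg).
    assert (HB : derivable_pos B) by (apply (iter_derivable_pos (S m) 0); weaken Hg).
    rewrite E. etransitivity;
      [apply (P_lin _ _ A (fun s => s * B s)); auto using derivable_pos_mul_id|].
    intros t ht. rewrite (P_mul_id B HB t ht). unfold A, B.
    rewrite !Nat.iter_succ, (S_INR (S m)). ring.
Qed.

End Iterate.

Lemma Dx_lin a b f g : derivable_pos f -> derivable_pos g ->
  Dx (fun t => a * f t + b * g t) ≐ (fun t => a * Dx f t + b * Dx g t).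
Proof.
  intros Hf Hg t ht. apply Dx_unique.
  apply (derivable_pt_lim_plus (fun s => a * f s) (fun s => b * g s));
    apply derivable_pt_lim_scal; now apply Dx_derivable.
Qed.

Lemma Dx_mul_id g : derivable_pos g -> Dx (fun t => t * g t) ≐ (fun t => g t + t * Dx g t).
Proof.
  intros Hg t ht. transitivity (1 * g t + t * Dx g t); [|ring].
  apply Dx_unique, (derivable_pt_lim_mult (fun s => s) g).
  - apply derivable_pt_lim_id.
  - now apply Dx_derivable.
Qed.

Lemma Dn_S m f : Dn (S m) f = Dx (Dn m f).
Proof. reflexivity. Qed.

Lemma Dn_reg m n f : derivable_upto (m + n) f -> derivable_upto n (Dn m f).
Proof. apply iter_reg, derivable_upto_Dx. Qed.

Lemma Dn_mul_id m g : derivable_upto (S m) g ->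
  Dn (S m) (fun t => t * g t) ≐ (fun t => INR (S m) * Dn m g t + t * Dn (S m) g t).
Proof.
  apply iter_mul_id; auto using Dx_eqpos, derivable_upto_Dx, Dx_lin, Dx_mul_id.
Qed.

Definition Eop (f : R -> R) : R -> R := fun t => Dx f t - f t.
Notation Epow m := (Nat.iter m Eop).

#[export] Instance Eop_eqpos : Proper (eqpos ==> eqpos) Eop.
Proof. intros f g H t ht. unfold Eop. now rewrite (H t ht), (Dx_eqpos f g H t ht). Qed.

#[export] Instance Epow_eqpos m : Proper (eqpos ==> eqpos) (Epow m) :=
  iter_eqpos Eop m Eop_eqpos.

Lemma Eop_reg n f : derivable_upto (S n) f -> derivable_upto n (Eop f).
Proof.
  intros H. apply derivable_upto_minus; [now apply derivable_upto_Dx | weaken H].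
Qed.

Lemma Eop_lin a b f g : derivable_pos f -> derivable_pos g ->
  Eop (fun t => a * f t + b * g t) ≐ (fun t => a * Eop f t + b * Eop g t).
Proof. intros Hf Hg t ht. unfold Eop. rewrite (Dx_lin a b f g Hf Hg t ht). ring. Qed.

Lemma Eop_mul_id g : derivable_pos g -> Eop (fun t => t * g t) ≐ (fun t => g t + t * Eop g t).
Proof. intros Hg t ht. unfold Eop. rewrite (Dx_mul_id g Hg t ht). ring. Qed.

Lemma Epow_reg m n f : derivable_upto (m + n) f -> derivable_upto n (Epow m f).
Proof. apply iter_reg, Eop_reg. Qed.

Lemma Epow_lin m a b f g : derivable_upto m f -> derivable_upto m g ->
  Epow m (fun t => a * f t + b * g t) ≐ (fun t => a * Epow m f t + b * Epow m g t).
Proof. apply iter_lin; auto using Eop_eqpos, Eop_reg, Eop_lin, Eop_mul_id. Qed.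

Lemma Epow_mul_id m g : derivable_upto (S m) g ->
  Epow (S m) (fun t => t * g t) ≐ (fun t => INR (S m) * Epow m g t + t * Epow (S m) g t).
Proof. apply iter_mul_id; auto using Eop_eqpos, Eop_reg, Eop_lin, Eop_mul_id. Qed.

Lemma Dx_Eop g : derivable_upto 2 g -> Dx (Eop g) ≐ Eop (Dx g).
Proof.
  intros Hg. apply Dx_minus.
  - apply (derivable_upto_pos 0), derivable_upto_Dx, Hg.
  - apply (derivable_upto_pos 1), Hg.
Qed.

Lemma Dx_Epow m g : derivable_upto (S (S m)) g -> Dx (Epow m g) ≐ Epow m (Dx g).
Proof.
  induction m as [|m IH]; intros Hg; [reflexivity|].
  rewrite !Nat.iter_succ, Dx_Eop, IH by (weaken Hg || (apply Epow_reg; weaken Hg)).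
  reflexivity.
Qed.

Lemma Epow_Dx m v : derivable_upto (S m) v ->
  Epow m (Dx v) ≐ (fun t => Epow (S m) v t + Epow m v t).
Proof.
  intros Hv.
  assert (E : Dx v ≐ (fun t => 1 * Eop v t + 1 * v t)) by (intros t _; unfold Eop; ring).
  rewrite E, Epow_lin by (apply Eop_reg, Hv || weaken Hv).
  intros t _. rewrite Nat.iter_succ_r. ring.
Qed.

Lemma derivable_pt_lim_exp_neg t : derivable_pt_lim (fun s => exp (- s)) t (- exp (- t)).
Proof.
  replace (- exp (- t)) with (exp (- t) * - (1)) by ring.
  apply (derivable_pt_lim_comp (fun s => - s) exp).
  - apply (derivable_pt_lim_opp (fun s => s)), derivable_pt_lim_id.
  - apply derivable_pt_lim_exp.
Qed.

Lemma Dn_exp_neg_mul m g : derivable_upto m g ->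
  Dn m (fun t => exp (- t) * g t) ≐ (fun t => exp (- t) * Epow m g t).
Proof.
  induction m as [|m IH]; intros Hg; [reflexivity|].
  rewrite Dn_S, IH by weaken Hg.
  assert (HE : derivable_pos (Epow m g)).
  { apply (derivable_upto_pos 0), Epow_reg. now rewrite Nat.add_1_r. }
  intros t ht. change (Epow (S m) g t) with (Dx (Epow m g) t - Epow m g t).
  transitivity (- exp (- t) * Epow m g t + exp (- t) * Dx (Epow m g) t); [|ring].
  apply Dx_unique, (derivable_pt_lim_mult (fun s => exp (- s)) (Epow m g)).
  - apply derivable_pt_lim_exp_neg.
  - now apply Dx_derivable.
Qed.

#[export] Instance L2_eqpos gm : Proper (eqpos ==> eqpos) (L2 gm).
Proof. intros f g H t ht. unfold L2. now rewrite !(Dn_eqpos _ f g H t ht). Qed.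

Lemma L2_reg gm k f : derivable_upto (k + 2) f -> derivable_upto k (L2 gm f).
Proof.
  intros Hf. apply derivable_upto_plus.
  - apply (derivable_upto_mult k (fun t => t)); [apply smooth_id|].
    apply Dn_reg. now rewrite Nat.add_comm.
  - apply (derivable_upto_mult k (fun t => gm + 1 - t)).
    + apply (derivable_upto_minus k (fun _ => gm + 1)); [apply smooth_const|apply smooth_id].
    + apply Dn_reg. weaken Hf.
Qed.

Lemma L2_Eop gm g : derivable_upto 2 g ->
  L2 gm g ≐ (fun t => Eop (fun s => s * Dx g s) t + gm * Dx g t).
Proof.
  intros Hg t ht. unfold Eop.
  rewrite (Dx_mul_id (Dx g) (derivable_upto_pos 0 _ (derivable_upto_Dx 1 _ Hg)) t ht).
  unfold L2. change (Dn 2 g t) with (Dx (Dx g) t). change (Dn 1 g t) with (Dx g t). ring.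
Qed.

Lemma L2_mul_id gm h : derivable_upto 2 h ->
  L2 gm (fun t => t * h t) ≐ (fun t => t * L2 (gm + 2) h t + (gm + 1) * h t - t * h t).
Proof.
  intros Hh t ht. unfold L2.
  rewrite (Dn_mul_id 1 h Hh t ht), (Dn_mul_id 0 h ltac:(weaken Hh) t ht).
  change (Dn 0 h t) with (h t). cbn [INR]. ring.
Qed.

Lemma Dx_minus_scal c f g : derivable_pos f -> derivable_pos g ->
  Dx (fun t => f t - c * g t) ≐ (fun t => Dx f t - c * Dx g t).
Proof.
  intros Hf Hg t ht. apply Dx_unique.
  apply (derivable_pt_lim_minus f (fun s => c * g s));
    [|apply derivable_pt_lim_scal]; now apply Dx_derivable.
Qed.

Lemma L2_minus_scal gm c f g : derivable_upto 2 f -> derivable_upto 2 g ->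
  L2 gm (fun t => f t - c * g t) ≐ (fun t => L2 gm f t - c * L2 gm g t).
Proof.
  intros Hf Hg.
  assert (D1 : Dx (fun t => f t - c * g t) ≐ (fun t => Dx f t - c * Dx g t))
    by (apply Dx_minus_scal; now apply (derivable_upto_pos 1)).
  assert (D2 : Dx (Dx (fun t => f t - c * g t)) ≐ (fun t => Dx (Dx f) t - c * Dx (Dx g) t)).
  { rewrite D1. apply Dx_minus_scal; apply (derivable_upto_pos 0), derivable_upto_Dx;
      assumption. }
  intros t ht. unfold L2. change (Dn 2 ?h t) with (Dx (Dx h) t). change (Dn 1 ?h t) with (Dx h t).
  rewrite (D1 t ht), (D2 t ht). ring.
Qed.

Definition L2sub (gm c : R) (f : R -> R) : R -> R := fun t => L2 gm f t - c * f t.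

#[export] Instance L2sub_eqpos gm c : Proper (eqpos ==> eqpos) (L2sub gm c).
Proof. intros f g H t ht. unfold L2sub. now rewrite (L2_eqpos gm f g H t ht), (H t ht). Qed.

Lemma L2sub_reg gm c k f : derivable_upto (k + 2) f -> derivable_upto k (L2sub gm c f).
Proof.
  intros H. apply derivable_upto_minus; [now apply L2_reg|].
  apply derivable_upto_scal. weaken H.
Qed.

Lemma Epow_S_euler m p h : derivable_upto (S (S m)) h ->
  Epow (S m) (fun t => p * h t + t * Dx h t) ≐ L2sub (p + INR m) p (Epow m h).
Proof.
  intros Hh.
  assert (HDh : derivable_upto (S m) (Dx h)) by now apply derivable_upto_Dx.
  assert (E : (fun t => p * h t + t * Dx h t) ≐
              (fun t => p * h t + 1 * (fun s => s * Dx h s) t)) by (intros t _; ring).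
  rewrite E. etransitivity.
  { apply Epow_lin; [weaken Hh|].
    apply (derivable_upto_mult _ (fun s => s)); [apply smooth_id | exact HDh]. }
  intros t ht. rewrite (Epow_mul_id m (Dx h) HDh t ht).
  assert (HE : derivable_upto 2 (Epow m h)) by (apply Epow_reg; weaken Hh).
  assert (HEd : derivable_pos (Epow m (Dx h)))
    by (apply (derivable_upto_pos 0), Epow_reg; weaken HDh).
  assert (X : (fun s => s * Dx (Epow m h) s) ≐ (fun s => s * Epow m (Dx h) s))
    by (intros s hs; now rewrite (Dx_Epow m h Hh s hs)).
  unfold L2sub. rewrite (L2_Eop _ _ HE t ht), (Eop_eqpos _ _ X t ht),
    (Eop_mul_id _ HEd t ht), (Dx_Epow m h Hh t ht).
  change (Eop (Epow m (Dx h)) t) with (Epow (S m) (Dx h) t).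
  rewrite (Epow_Dx m h ltac:(weaken Hh) t ht), S_INR. ring.
Qed.

Definition Tn (n : nat) (u : R -> R) : R -> R := Epow n (Dn n (fun t => t ^ n * u t)).

Lemma derivable_upto_pow_mul n p f : derivable_upto n f -> derivable_upto n (fun t => t ^ p * f t).
Proof. apply derivable_upto_mult, smooth_pow. Qed.

Lemma Tn_S n u : derivable_upto (2 * n + 2) u ->
  Tn (S n) u ≐ L2sub (2 * INR n + 1) (INR n + 1) (Tn n u).
Proof.
  intros Hu. set (w := fun t => t ^ n * u t).
  assert (Hw : derivable_upto (2 * n + 2) w) by now apply derivable_upto_pow_mul.
  assert (Hv : derivable_upto (S (S n)) (Dn n w)) by (apply Dn_reg; weaken Hw).
  assert (E : (fun t => t ^ S n * u t) ≐ (fun t => t * w t))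
    by (intros t _; unfold w; simpl; ring).
  unfold Tn. rewrite E, (Dn_mul_id n w) by weaken Hw.
  etransitivity; [apply (Epow_S_euler n (INR (S n)) (Dn n w) Hv)|].
  rewrite S_INR. replace (INR n + 1 + INR n) with (2 * INR n + 1) by ring. reflexivity.
Qed.

Lemma inv_pow_mul_pow p t : 0 < t -> (/ t) ^ p * t ^ p = 1.
Proof. intros ht. rewrite <- Rpow_mult_distr, Rinv_l by lra. apply pow1. Qed.

Lemma inv_pow_Dx_pow_mul q h : derivable_pos h ->
  (fun t => (/ t) ^ q * Dx (fun s => s ^ S q * h s) t) ≐
  (fun t => INR (S q) * h t + t * Dx h t).
Proof.
  intros Hh t ht.
  assert (D : Dx (fun s => s ^ S q * h s) t = INR (S q) * t ^ q * h t + t ^ S q * Dx h t).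
  { apply Dx_unique, (derivable_pt_lim_mult (fun s => s ^ S q) h).
    - apply derivable_pt_lim_pow.
    - now apply Dx_derivable. }
  rewrite D. transitivity ((/ t) ^ q * t ^ q * (INR (S q) * h t + t * Dx h t)); [simpl; ring|].
  rewrite inv_pow_mul_pow by exact ht. ring.
Qed.

Definition Vn (n m : nat) (f : R -> R) : R -> R :=
  Epow m (fun t => (/ t) ^ (n - m) * Dn m (fun s => s ^ n * f s) t).

Lemma Vn_0 n f : Vn n 0 f ≐ f.
Proof.
  intros t ht. unfold Vn. simpl.
  rewrite Nat.sub_0_r, <- Rmult_assoc, inv_pow_mul_pow by exact ht. ring.
Qed.

Lemma Vn_diag n f : Vn n n f ≐ Tn n f.
Proof. unfold Vn, Tn. apply Epow_eqpos. intros t _. rewrite Nat.sub_diag. simpl. ring. Qed.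

Lemma Vn_S n m f : (m < n)%nat -> derivable_upto (2 * n) f ->
  Vn n (S m) f ≐ L2sub (INR n) (INR n - INR m) (Vn n m f).
Proof.
  intros hmn Hf. unfold Vn.
  set (P := fun s => s ^ n * f s).
  assert (HP : derivable_upto (2 * n) P) by now apply derivable_upto_pow_mul.
  assert (Hq : (n - m = S (n - S m))%nat) by lia.
  rewrite Hq. set (q := (n - S m)%nat).
  set (h := fun t => (/ t) ^ S q * Dn m P t).
  assert (Hh : derivable_upto (S (S m)) h).
  { apply derivable_upto_mult; [apply smooth_inv_pow|]. apply Dn_reg. weaken HP. }
  assert (Hw : Dn m P ≐ (fun t => t ^ S q * h t)).
  { intros t ht. unfold h.
    rewrite <- Rmult_assoc, (Rmult_comm (t ^ S q)), inv_pow_mul_pow by exact ht. ring. }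
  assert (E : (fun t => (/ t) ^ q * Dn (S m) P t) ≐ (fun t => INR (S q) * h t + t * Dx h t)).
  { rewrite <- (inv_pow_Dx_pow_mul q h) by now apply (derivable_upto_pos (S m)).
    intros t ht. now rewrite Dn_S, (Dx_eqpos _ _ Hw t ht). }
  rewrite E, Epow_S_euler by exact Hh.
  replace (INR (S q) + INR m) with (INR n) by (rewrite <- plus_INR; f_equal; lia).
  replace (INR n - INR m) with (INR (S q)) by (rewrite <- minus_INR by lia; now rewrite Hq).
  reflexivity.
Qed.

Lemma opprod_eqpos A m : (forall j, Proper (eqpos ==> eqpos) (A j)) ->
  Proper (eqpos ==> eqpos) (opprod A m).
Proof. intros HA f g H. induction m as [|m IH]; [exact H|]. now apply HA. Qed.

Lemma opprod_ext A B m f : (forall j, (j < m)%nat -> forall g, A j g ≐ B j g) ->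
  (forall j, Proper (eqpos ==> eqpos) (B j)) -> opprod A m f ≐ opprod B m f.
Proof.
  intros HAB HB. induction m as [|m IH]; [reflexivity|]. simpl.
  rewrite HAB by lia. apply HB, IH. intros j hj. apply HAB. lia.
Qed.

Lemma opprod_reg A m : (forall j k f, derivable_upto (k + 2) f -> derivable_upto k (A j f)) ->
  forall k f, derivable_upto (k + 2 * m) f -> derivable_upto k (opprod A m f).
Proof.
  intros HA. induction m as [|m IH]; intros k f Hf; [weaken Hf|].
  apply HA, IH. weaken Hf.
Qed.

Lemma opprod_shift A m f : opprod A (S m) f = opprod (fun j => A (S j)) m (A 0%nat f).
Proof. induction m as [|m IH]; [reflexivity|]. simpl in *. now rewrite IH. Qed.

Lemma opprod_L2sub_Vn n f : derivable_upto (2 * n) f -> forall m, (m <= n)%nat ->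
  opprod (fun j => L2sub (INR n) (INR n - INR j)) m f ≐ Vn n m f.
Proof.
  intros Hf m. induction m as [|m IH]; intros hm; [symmetry; apply Vn_0|].
  simpl. rewrite IH by lia. symmetry. now apply Vn_S.
Qed.

Lemma L2sub_comm gm c d f : derivable_upto 4 f ->
  L2sub gm c (L2sub gm d f) ≐ L2sub gm d (L2sub gm c f).
Proof.
  intros Hf. assert (H2 : derivable_upto 2 f) by weaken Hf.
  assert (HL : derivable_upto 2 (L2 gm f)) by now apply L2_reg.
  intros t ht. unfold L2sub.
  rewrite (L2_minus_scal gm d _ _ HL H2 t ht), (L2_minus_scal gm c _ _ HL H2 t ht). ring.
Qed.

Lemma L2sub_comm_opprod gm c d m f : derivable_upto (2 * m + 2) f ->
  L2sub gm d (opprod (fun j => L2sub gm (c j)) m f) ≐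
  opprod (fun j => L2sub gm (c j)) m (L2sub gm d f).
Proof.
  induction m as [|m IH]; intros Hf; [reflexivity|]. simpl.
  assert (HA : derivable_upto 4 (opprod (fun j => L2sub gm (c j)) m f)).
  { apply opprod_reg; [intros; now apply L2sub_reg | weaken Hf]. }
  rewrite L2sub_comm, IH by (exact HA || weaken Hf). reflexivity.
Qed.

Lemma opprod_L2sub_rev gm m c f : derivable_upto (2 * m) f ->
  opprod (fun j => L2sub gm (c j)) m f ≐ opprod (fun j => L2sub gm (c (m - S j)%nat)) m f.
Proof.
  revert c f; induction m as [|m IH]; intros c f Hf; [reflexivity|].
  rewrite (opprod_shift (fun j => L2sub gm (c (S m - S j)%nat))). simpl.
  rewrite IH, L2sub_comm_opprod, Nat.sub_0_r by weaken Hf. reflexivity.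
Qed.

Lemma opprod_L2sub_fixed_Tn n u : derivable_upto (2 * n) u ->
  opprod (fun j => L2sub (INR n) (INR j + 1)) n u ≐ Tn n u.
Proof.
  intros Hu. rewrite <- Vn_diag, <- (opprod_L2sub_Vn n u Hu n (le_n n)).
  etransitivity; [|symmetry; apply (opprod_L2sub_rev (INR n) n (fun j => INR n - INR j) u Hu)].
  apply opprod_ext; [|intros; apply L2sub_eqpos].
  intros j hj g t _. unfold L2sub. rewrite minus_INR, S_INR by lia. ring.
Qed.

Lemma derivable_upto_L2_minus gm d k f : derivable_upto (k + 2) f ->
  derivable_upto k (fun t => L2 gm f t - d * f t - f t).
Proof.
  intros H. apply derivable_upto_minus; [apply derivable_upto_minus|weaken H].
  - now apply L2_reg.
  - apply derivable_upto_scal. weaken H.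
Qed.

Lemma L2_minus_eqpos gm d : Proper (eqpos ==> eqpos) (fun f t => L2 gm f t - d * f t - f t).
Proof. intros f g H t ht. now rewrite (L2_eqpos gm f g H t ht), (H t ht). Qed.

Lemma opprod_graded_Tn n u : derivable_upto (2 * n) u ->
  opprod (fun j f t => L2 (2 * INR j + 1) f t - INR j * f t - f t) n u ≐ Tn n u.
Proof.
  intros Hu. induction n as [|n IH]; [intros t _; unfold Tn; simpl; ring|].
  simpl. rewrite (L2_minus_eqpos _ _ _ _ (IH ltac:(weaken Hu))), (Tn_S n u) by weaken Hu.
  intros t _. unfold L2sub. ring.
Qed.

Lemma opprod_fixed_Tn a u : derivable_upto (2 * (a + 2)) u ->
  opprod (fun j f t => L2 (INR a + 2) f t - INR j * f t - f t) (a + 2) u ≐ Tn (a + 2) u.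
Proof.
  intros Hu. rewrite <- opprod_L2sub_fixed_Tn by exact Hu.
  apply opprod_ext; [|intros; apply L2sub_eqpos].
  intros j _ g t _. unfold L2sub.
  replace (INR (a + 2)) with (INR a + 2) by (rewrite plus_INR; simpl; ring). ring.
Qed.

Lemma opprod_conj_mul_id A B m h :
  (forall j g, derivable_upto 2 g -> A j (fun t => t * g t) ≐ (fun t => t * B j g t)) ->
  (forall j, Proper (eqpos ==> eqpos) (A j)) ->
  (forall j k f, derivable_upto (k + 2) f -> derivable_upto k (B j f)) ->
  derivable_upto (2 * m) h ->
  opprod A m (fun t => t * h t) ≐ (fun t => t * opprod B m h t).
Proof.
  intros HAB HA HB. induction m as [|m IH]; intros Hh; [reflexivity|]. simpl.
  rewrite (HA m _ _ (IH ltac:(weaken Hh))).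
  apply HAB, (opprod_reg _ _ HB). weaken Hh.
Qed.

Definition L2shift (gm c d : R) (f : R -> R) : R -> R :=
  fun t => L2 gm f t - c / t * f t - d * f t.

#[export] Instance L2shift_eqpos gm c d : Proper (eqpos ==> eqpos) (L2shift gm c d).
Proof. intros f g H t ht. unfold L2shift. now rewrite (L2_eqpos gm f g H t ht), (H t ht). Qed.

Lemma L2shift_mul_id gm c gm' d g : c = gm + 1 -> gm' = gm + 2 -> derivable_upto 2 g ->
  L2shift gm c d (fun t => t * g t) ≐ (fun t => t * (L2 gm' g t - d * g t - g t)).
Proof.
  intros -> -> Hg t ht. unfold L2shift. rewrite (L2_mul_id gm g Hg t ht). field. lra.
Qed.

Lemma Lhigh_eqpos a y1 y2 x : y1 ≐ y2 -> 0 < x -> Lhigh a y1 x = Lhigh a y2 x.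
Proof.
  intros H hx. unfold Lhigh. f_equal. apply (Dn_eqpos (a + 2)); [|exact hx].
  intros t ht. f_equal. apply (Dn_eqpos (a + 2)); [|exact ht].
  intros s hs. now rewrite (H s hs).
Qed.

Lemma Lhigh_mul_id a u x : derivable_upto (2 * (a + 2)) u -> 0 < x ->
  Lhigh a (fun t => t * u t) x = (-1) ^ (a + 1) * x * Tn (a + 2) u x.
Proof.
  intros Hu hx. unfold Lhigh, Tn.
  set (w := fun s => s ^ (a + 2) * u s).
  assert (Hw : derivable_upto (a + 2) (Dn (a + 2) w))
    by (apply Dn_reg, derivable_upto_pow_mul; weaken Hu).
  assert (E : (fun t => exp (- t) * Dn (a + 2) (fun s => s ^ (a + 1) * (s * u s)) t) ≐
              (fun t => exp (- t) * Dn (a + 2) w t)).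
  { intros t ht. f_equal. apply (Dn_eqpos (a + 2)); [|exact ht].
    intros s _. unfold w. replace (a + 2)%nat with (S (a + 1)) by lia. simpl. ring. }
  rewrite (Dn_eqpos _ _ _ E x hx), (Dn_exp_neg_mul _ _ Hw x hx), exp_Ropp.
  pose proof (exp_pos x). field. lra.
Qed.

Lemma Lhigh_mul_id_fixed a u x : derivable_upto (2 * (a + 2)) u -> 0 < x ->
  Lhigh a (fun t => t * u t) x = (-1) ^ (a + 1) * x *
    opprod (fun j f t => L2 (INR a + 2) f t - INR j * f t - f t) (a + 2) u x.
Proof. intros Hu hx. now rewrite Lhigh_mul_id, (opprod_fixed_Tn a u Hu x hx). Qed.

Lemma Lhigh_mul_id_graded a u x : derivable_upto (2 * (a + 2)) u -> 0 < x ->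
  Lhigh a (fun t => t * u t) x = (-1) ^ (a + 1) * x *
    opprod (fun j f t => L2 (2 * INR j + 1) f t - INR j * f t - f t) (a + 2) u x.
Proof. intros Hu hx. now rewrite Lhigh_mul_id, (opprod_graded_Tn (a + 2) u Hu x hx). Qed.

Lemma Lhigh_of_conj a A B y x :
  (forall v, derivable_upto (2 * (a + 2)) v ->
     Lhigh a (fun t => t * v t) x = (-1) ^ (a + 1) * x * opprod B (a + 2) v x) ->
  (forall j g, derivable_upto 2 g -> A j (fun t => t * g t) ≐ (fun t => t * B j g t)) ->
  (forall j, Proper (eqpos ==> eqpos) (A j)) ->
  (forall j k f, derivable_upto (k + 2) f -> derivable_upto k (B j f)) ->
  derivable_upto (2 * (a + 2)) y -> 0 < x ->
  Lhigh a y x = (-1) ^ (a + 1) * opprod A (a + 2) y x.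
Proof.
  intros HL HAB HA HB Hy hx.
  set (v := fun t => / t * y t).
  assert (Hv : derivable_upto (2 * (a + 2)) v)
    by (apply derivable_upto_mult; [apply smooth_inv | exact Hy]).
  assert (Ey : y ≐ (fun t => t * v t)) by (intros t ht; unfold v; field; lra).
  rewrite (Lhigh_eqpos a _ _ x Ey hx), (HL v Hv), (opprod_eqpos A (a + 2) HA _ _ Ey x hx),
    (opprod_conj_mul_id A B (a + 2) v HAB HA HB Hv x hx).
  ring.
Qed.

Lemma derivable_upto_of_Cn_pos n f : Cn_pos n f -> derivable_upto n f.
Proof. now intros [H _]. Qed.

Theorem theorem3p1 (a : nat) (y u : R -> R) (x : R) :
  Cn_pos (2 * a + 4) y -> Cn_pos (2 * a + 4) u -> 0 < x ->
  Lhigh a y x =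
    (-1) ^ (a + 1) *
    opprod (fun j f t => L2 (INR a) f t - (INR a + 1) / t * f t - INR j * f t)
           (a + 2) y x
  /\
  Lhigh a (fun t => t * u t) x =
    (-1) ^ (a + 1) * x *
    opprod (fun j f t => L2 (INR a + 2) f t - INR j * f t - f t) (a + 2) u x
  /\
  Lhigh a y x =
    (-1) ^ (a + 1) *
    opprod (fun j f t => L2 (2 * INR j - 1) f t - 2 * INR j / t * f t - INR j * f t)
           (a + 2) y x
  /\
  Lhigh a (fun t => t * u t) x =
    (-1) ^ (a + 1) * x *
    opprod (fun j f t => L2 (2 * INR j + 1) f t - INR j * f t - f t) (a + 2) u x.
Proof.
  intros Hy%derivable_upto_of_Cn_pos Hu%derivable_upto_of_Cn_pos hx.
  assert (Ry : derivable_upto (2 * (a + 2)) y) by weaken Hy.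
  assert (Ru : derivable_upto (2 * (a + 2)) u) by weaken Hu.
  split; [|split; [|split]].
  - apply (Lhigh_of_conj a _ _ y x (fun v Hv => Lhigh_mul_id_fixed a v x Hv hx)); auto.
    + intros j g. apply L2shift_mul_id; ring.
    + intros j. apply L2shift_eqpos.
    + intros j. apply derivable_upto_L2_minus.
  - now apply Lhigh_mul_id_fixed.
  - apply (Lhigh_of_conj a _ _ y x (fun v Hv => Lhigh_mul_id_graded a v x Hv hx)); auto.
    + intros j g. apply L2shift_mul_id; ring.
    + intros j. apply L2shift_eqpos.
    + intros j. apply derivable_upto_L2_minus.
  - now apply Lhigh_mul_id_graded.
Qed.
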